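(* Let $G$ be a connected edge-stable equimatchable graph and let $v\in V(G)$ be a cut vertex. Then every connected component of $G-v$ that is factor-critical consists of a single vertex.
   Context: All graphs are finite and simple. A graph is equimatchable if all its maximal matchings have the same cardinality; an equimatchable graph $G$ is edge-stable if $G\setminus e$ (delete edge $e$, keep vertices) is equimatchable for every $e\in E(G)$. A graph $H$ is factor-critical if $H-x$ has a perfect matching for every $x\in V(H)$. *)

From mathcomp Require Import all_boot.
Set Implicit Arguments. Unset Strict Implicit. Unset Printing Implicit Defensive.

(* A finite simple graph is given by a vertex set V : {set T} over a finType T
   together with an adjacency relation E : rel T that is symmetric and
   irreflexive; only adjacencies between vertices of V matter. *)

Definition simple_rel (T : finType) (E : rel T) : Prop :=
  symmetric E /\ irreflexive E.

Definition edges (T : finType) (V : {set T}) (E : rel T) : {set {set T}} :=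
  [set [set x; y] | x in V, y in V & E x y].

Definition matching (T : finType) (V : {set T}) (E : rel T) (M : {set {set T}}) : bool :=
  (M \subset edges V E) && trivIset M.

Definition maximal_matching (T : finType) (V : {set T}) (E : rel T) (M : {set {set T}}) : bool :=
  matching V E M &&
  [forall f in edges V E, (f \notin M) ==> ~~ matching V E (f |: M)].

Definition equimatchable (T : finType) (V : {set T}) (E : rel T) : Prop :=
  forall M1 M2 : {set {set T}},
    maximal_matching V E M1 -> maximal_matching V E M2 -> #|M1| = #|M2|.

Definition del_edge (T : finType) (E : rel T) (f : {set T}) : rel T :=
  fun x y => E x y && ([set x; y] != f).

Definition edge_stable (T : finType) (V : {set T}) (E : rel T) : Prop :=
  equimatchable V E /\ forall f, f \in edges V E -> equimatchable V (del_edge E f).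

Definition restr (T : finType) (V : {set T}) (E : rel T) : rel T :=
  [rel x y | [&& x \in V, y \in V & E x y]].

Definition connected (T : finType) (V : {set T}) (E : rel T) : Prop :=
  forall x y, x \in V -> y \in V -> connect (restr V E) x y.

(* v is a cut vertex of (V,E): G - v has more connected components than G,
   i.e. (for connected G) G - v is disconnected *)
Definition cut_vertex (T : finType) (V : {set T}) (E : rel T) (v : T) : Prop :=
  v \in V /\ ~ connected (V :\ v) E.

Definition component (T : finType) (V : {set T}) (E : rel T) (C : {set T}) : Prop :=
  exists2 x, x \in V & C = [set y in V | connect (restr V E) x y].

Definition has_perfect_matching (T : finType) (V : {set T}) (E : rel T) : Prop :=
  exists M : {set {set T}}, matching V E M /\ cover M = V.

Definition factor_critical (T : finType) (V : {set T}) (E : rel T) : Prop :=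
  forall x, x \in V -> has_perfect_matching (V :\ x) E.

From mathcomp Require Import all_boot.
Set Implicit Arguments. Unset Strict Implicit. Unset Printing Implicit Defensive.

(** Let u be a neighbour of v in a factor-critical component C of G - v with
    |C| > 1, Q a perfect matching of C - u, and f = xy an edge of Q.  Extending
    {uv} together with Q - f to a maximal matching M1 of G \ f leaves f free:
    every neighbour of x or y other than x, y lies in C + v and is covered by
    an edge of M1 missing f.  So f + M1 is a maximal matching of G, one edge
    larger than the maximal matching M1 of G \ f.  On the other hand, a perfect
    matching of C - x covers y by an edge meeting f, so G has a maximal matching
    M2 avoiding f, which is then maximal in G \ f as well.  Equimatchability of
    G and of G \ f gives |M1| + 1 = |M2| = |M1|. *)

Section Matchings.
Variable T : finType.
Implicit Types (V W : {set T}) (E : rel T) (M : {set {set T}}) (f g : {set T}).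

Lemma edgesP V E g :
  reflect (exists a b, [/\ a \in V, b \in V, E a b & g = [set a; b]])
          (g \in edges V E).
Proof.
apply: (iffP imset2P) => [[a b aV]|[a [b [aV bV eab ->]]]].
  by rewrite inE => /andP[bV eab] ->; exists a, b.
by apply: (@Imset2spec _ _ _ _ _ _ _ a b aV); rewrite ?inE ?bV.
Qed.

Lemma edge_neq0 V E g : g \in edges V E -> g != set0.
Proof. by case/edgesP=> a [b [_ _ _ ->]]; apply/set0Pn; exists a; rewrite !inE eqxx. Qed.

Lemma edgesS V E W : W \subset V -> edges W E \subset edges V E.
Proof.
move=> sWV; apply/subsetP=> g /edgesP[a [b [aW bW eab ->]]].
by apply/edgesP; exists a, b; rewrite !(subsetP sWV).
Qed.

Lemma edges_del_edge V E f g :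
  (g \in edges V (del_edge E f)) = (g \in edges V E) && (g != f).
Proof.
apply/idP/andP => [/edgesP[a [b [aV bV /andP[eab ne] gab]]]|].
  by rewrite gab ne; split=> //; apply/edgesP; exists a, b.
case=> /edgesP[a [b [aV bV eab gab]]] ne; apply/edgesP; exists a, b.
by rewrite /del_edge eab -gab.
Qed.

Lemma matching_del_edge V E f M :
  matching V (del_edge E f) M -> matching V E M.
Proof.
case/andP=> sME tiM; rewrite /matching tiM andbT; apply: subset_trans sME _.
by apply/subsetP=> g; rewrite edges_del_edge => /andP[].
Qed.

Lemma matching_del_edge_notin V E f M :
  matching V (del_edge E f) M -> f \notin M.
Proof.
case/andP=> sME _; apply/negP=> /(subsetP sME).
by rewrite edges_del_edge eqxx andbF.
Qed.

Lemma matching_setU1 V E M f :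
  matching V E M -> f \in edges V E -> {in M, forall g, [disjoint f & g]} ->
  matching V E (f |: M).
Proof.
case/andP=> sME tiM fE dfM; rewrite /matching subUset sub1set fE sME.
suff M0 : set0 \notin M by have [] := trivIsetU1 dfM tiM M0.
by apply/negP=> /(subsetP sME)/edge_neq0; rewrite eqxx.
Qed.

Lemma matching_extend V E M0 :
  matching V E M0 -> exists2 M : {set {set T}}, M0 \subset M & maximal_matching V E M.
Proof.
move=> mM0; have P0 : matching V E M0 && (M0 \subset M0) by rewrite mM0 subxx.
case: (@arg_maxnP _ M0 (fun M => matching V E M && (M0 \subset M))
         (fun M => #|M|) P0) => M /andP[mM sM0M] Mmax.
exists M; rewrite // /maximal_matching mM; apply/forall_inP=> g _.
apply/implyP=> gM; apply/negP=> mgM.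
have := Mmax (g |: M); rewrite mgM (subset_trans sM0M (subsetUr _ _)).
by rewrite cardsU1 gM add1n /= ltnn => /(_ isT).
Qed.

Lemma maximal_matching_avoiding V E f g :
  g \in edges V E -> g != f -> ~~ [disjoint f & g] ->
  exists2 M : {set {set T}}, maximal_matching V E M & f \notin M.
Proof.
move=> gE gf fg; have mg : matching V E [set g] by rewrite /matching sub1set gE trivIset1.
have [M sgM mM] := matching_extend mg; exists M => //.
have gM : g \in M by rewrite -sub1set.
apply: contra fg => fM; case/andP: mM => /andP[_ /trivIsetP tiM] _.
by apply: tiM; rewrite // eq_sym.
Qed.

Lemma maximal_matching_del_edge V E M f :
  maximal_matching V E M -> f \notin M -> maximal_matching V (del_edge E f) M.
Proof.
case/andP=> /andP[sME tiM] maxM fM; rewrite /maximal_matching /matching tiM andbT.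
have -> : M \subset edges V (del_edge E f).
  apply/subsetP=> g gM; rewrite edges_del_edge (subsetP sME) //.
  by apply: contraNneq fM => <-.
apply/forall_inP=> g; rewrite edges_del_edge => /andP[gE _].
apply/implyP=> gM; apply: contra (@matching_del_edge V E f _) _.
exact: implyP (forall_inP maxM g gE) gM.
Qed.

Lemma maximal_matching_setU1_del_edge V E M f :
  maximal_matching V (del_edge E f) M -> matching V E (f |: M) ->
  maximal_matching V E (f |: M).
Proof.
case/andP=> /andP[sME _] maxM mfM; rewrite /maximal_matching mfM.
apply/forall_inP=> g gE; rewrite in_setU1 negb_or; apply/implyP=> /andP[gf gM].
apply/negP=> /andP[_ tigfM].
have gE' : g \in edges V (del_edge E f) by rewrite edges_del_edge gE.
apply: (negP (implyP (forall_inP maxM g gE') gM)).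
rewrite /matching subUset sub1set gE' sME (trivIsetS _ tigfM) //.
by rewrite setUS ?subsetUr.
Qed.

Lemma maximal_del_edge_not_matching_setU1 V E f M1 M2 :
  equimatchable V E -> equimatchable V (del_edge E f) ->
  maximal_matching V E M2 -> f \notin M2 ->
  maximal_matching V (del_edge E f) M1 -> ~~ matching V E (f |: M1).
Proof.
move=> eqG eqGf mM2 fM2 mM1; apply/negP=> mfM1.
have fM1 : f \notin M1 by case/andP: mM1 => /matching_del_edge_notin.
have := eqG _ _ (maximal_matching_setU1_del_edge mM1 mfM1) mM2.
rewrite -(eqGf _ _ mM1 (maximal_matching_del_edge mM2 fM2)) cardsU1 fM1.
by move/eqP; rewrite add1n eqn_leq ltnn.
Qed.

Lemma matching_disjoint_edge V E M f :
  simple_rel E -> matching V E M -> f \in edges V E -> f \notin M ->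
  (forall z t, z \in f -> t \in V -> E z t -> t \notin f ->
     exists2 h, h \in M & (t \in h) && [disjoint f & h]) ->
  {in M, forall g, [disjoint f & g]}.
Proof.
move=> [Esym Eirr] /andP[sME /trivIsetP tiM] fE fM nbrf g gM.
rewrite -setI_eq0; apply/set0Pn=> -[z /setIP[zf zg]].
have [t [tV Ezt gzt]] : exists t, [/\ t \in V, E z t & g = [set z; t]].
  case/edgesP: (subsetP sME g gM) => a [b [aV bV Eab gab]].
  move: zg; rewrite gab !inE => /orP[]/eqP->; first by exists b.
  by exists a; rewrite Esym setUC.
have tg : t \in g by rewrite gzt !inE eqxx orbT.
have [tf | tNf] := boolP (t \in f).
  have zt : z != t by apply: contraTneq Ezt => ->; rewrite Eirr.
  have gf : g = f.
    apply/eqP; rewrite eqEcard gzt subUset !sub1set zf tf cards2 zt.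
    by case/edgesP: fE => a [b [_ _ _ ->]]; rewrite cards2; case: (a != b).
  by move: fM; rewrite -gf gM.
have [h hM /andP[th dfh]] := nbrf z t zf tV Ezt tNf.
have gh : g != h by apply: contraTneq zg => ->; rewrite (disjointFr dfh zf).
by move: (disjointFr (tiM g h gM hM gh) tg); rewrite th.
Qed.

Lemma factor_critical_adjacent_edge V E f :
  irreflexive E -> factor_critical V E -> f \in edges V E ->
  exists2 g, g \in edges V E & (g != f) && ~~ [disjoint f & g].
Proof.
move=> Eirr fcV /edgesP[x [y [xV yV Exy ->]]].
have [N [/andP[sNE _] coverN]] := fcV x xV.
have yVx : y \in V :\ x by rewrite !inE yV andbT; apply: contraTneq Exy => ->; rewrite Eirr.
move: yVx; rewrite -coverN => /bigcupP[g gN yg].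
have sgVx : g \subset V :\ x by rewrite -coverN; apply: bigcup_sup.
have xg : x \notin g by apply/negP=> /(subsetP sgVx); rewrite !inE eqxx.
exists g; first exact: subsetP (edgesS E (subsetDl V [set x])) g (subsetP sNE g gN).
rewrite -setI_eq0; apply/andP; split.
  by apply: contraNneq xg => ->; rewrite !inE eqxx.
by apply/set0Pn; exists y; rewrite !inE eqxx orbT.
Qed.

End Matchings.

Section Component.
Variables (T : finType) (W : {set T}) (E : rel T) (C : {set T}).
Hypothesis compC : component W E C.

Lemma component_subset : C \subset W.
Proof. by case: compC => x _ ->; apply/subsetP=> y; rewrite inE => /andP[]. Qed.

Lemma component_closed z t : z \in C -> t \in W -> E z t -> t \in C.
Proof.
case: compC => x _ -> ; rewrite !inE => /andP[zW cxz] tW Ezt.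
by rewrite tW (connect_trans cxz (connect1 _)) // /restr /= zW tW.
Qed.

End Component.

Lemma cut_vertex_component_neighbour T (V : {set T}) E v C :
  symmetric E -> connected V E -> v \in V -> component (V :\ v) E C ->
  exists2 u, u \in C & E u v.
Proof.
move=> Esym connG vV compC; apply/exists_inP; apply: contraT => noNbr.
have [x xVv defC] := compC.
have xC : x \in C by rewrite defC inE xVv connect0.
have vC : v \notin C.
  by apply/negP=> /(subsetP (component_subset compC)); rewrite !inE eqxx.
have closedC : closed (restr V E) C.
  have closedC1 y z : restr V E y z -> y \in C -> z \in C.
    case/and3P=> _ zV Eyz yC; apply: (component_closed compC yC) => //.
    rewrite !inE zV andbT; apply: contraNneq noNbr => zv.
    by apply/exists_inP; exists y; rewrite // -zv.
  move=> y z Eyz; apply/idP/idP; first exact: closedC1.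
  by apply: closedC1; move: Eyz; rewrite /restr /= Esym andbCA.
have := closed_connect closedC (connG x v (subsetP (subsetDl V _) x xVv) vV).
by rewrite xC (negbTE vC).
Qed.

Lemma cut_vertex_component_augmentable T (V : {set T}) E v C u Q f :
  simple_rel E -> v \in V -> component (V :\ v) E C ->
  u \in C -> E u v -> matching (C :\ u) E Q -> cover Q = C :\ u -> f \in Q ->
  exists2 M : {set {set T}},
    maximal_matching V (del_edge E f) M & matching V E (f |: M).
Proof.
move=> [Esym Eirr] vV compC uC Euv /andP[sQE /trivIsetP tiQ] coverQ fQ.
have sCVv := component_subset compC.
have sCuV : C :\ u \subset V.
  by apply: subset_trans (subsetDl C _) (subset_trans sCVv (subsetDl V _)).
have sQEV : Q \subset edges V E := subset_trans sQE (edgesS E sCuV).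
have fE : f \in edges V E := subsetP sQEV f fQ.
have sQCu h : h \in Q -> h \subset C :\ u.
  by move=> hQ; rewrite -coverQ; apply: bigcup_sup.
have duvQ h : h \in Q -> [disjoint [set u; v] & h].
  move/sQCu=> sh; rewrite disjoints_subset subUset !sub1set !inE.
  apply/andP; split; apply/negP=> /(subsetP sh); rewrite !inE ?eqxx //.
  by case/andP=> _ /(subsetP sCVv); rewrite !inE eqxx.
have uV : u \in V by move: (subsetP sCVv u uC); rewrite !inE => /andP[].
have uvE : [set u; v] \in edges V E by apply/edgesP; exists u, v.
have uvf : [set u; v] != f.
  apply: contraTneq (duvQ f fQ) => ->.
  by rewrite -setI_eq0 setIid (negbTE (edge_neq0 fE)).
have mM0 : matching V (del_edge E f) ([set u; v] |: (Q :\ f)).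
  apply: matching_setU1.
  - rewrite /matching (trivIsetS (subsetDl Q _)) ?andbT; last exact/trivIsetP.
    apply/subsetP=> h; rewrite !inE => /andP[hf hQ].
    by rewrite edges_del_edge hf (subsetP sQEV).
  - by rewrite edges_del_edge uvE uvf.
  - by move=> h; rewrite !inE => /andP[_]; apply: duvQ.
have [M1 sM0M1 mM1] := matching_extend mM0.
exists M1 => //.
have mM1E : matching V E M1 by case/andP: mM1 => /matching_del_edge.
have fM1 : f \notin M1 by case/andP: mM1 => /matching_del_edge_notin.
apply: (matching_setU1 mM1E fE).
apply: (matching_disjoint_edge _ mM1E fE fM1) => // z t zf tV Ezt tNf.
have zC : z \in C by move: (subsetP (sQCu f fQ) z zf); rewrite !inE => /andP[].
have [tuv | tNuv] := boolP (t \in [set u; v]).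
  exists [set u; v]; first by apply: (subsetP sM0M1); rewrite !inE eqxx.
  by rewrite tuv disjoint_sym duvQ.
have tCu : t \in C :\ u.
  move: tNuv; rewrite !inE negb_or => /andP[tu tv].
  by rewrite tu (component_closed compC zC) // !inE tv tV.
move: tCu; rewrite -coverQ => /bigcupP[h hQ th].
have hf : h != f by apply: contraNneq tNf => <-.
exists h; first by apply: (subsetP sM0M1); rewrite !inE hf hQ orbT.
by rewrite th tiQ // eq_sym.
Qed.

Theorem lemma4p7 (T : finType) (V : {set T}) (E : rel T) (v : T) :
  simple_rel E ->
  connected V E ->
  edge_stable V E ->
  cut_vertex V E v ->
  forall C : {set T},
    component (V :\ v) E C ->
    factor_critical C E ->
    #|C| = 1.
Proof.
move=> [Esym Eirr] connG [eqG stableG] [vV _] C compC fcC.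
have [u uC Euv] := cut_vertex_component_neighbour Esym connG vV compC.
apply/eqP; apply: contraT => C1.
have [Q [mQ coverQ]] := fcC u uC.
have /set0Pn[w] : C :\ u != set0.
  by apply: contraNneq C1 => Cu0; rewrite (cardsD1 u C) uC Cu0 cards0.
rewrite -coverQ => /bigcupP[f fQ _].
have sCV : C \subset V := subset_trans (component_subset compC) (subsetDl V _).
have fEC : f \in edges C E.
  by case/andP: mQ => /subsetP sQE _; apply: subsetP (edgesS E (subsetDl C _)) f (sQE f fQ).
have fE : f \in edges V E := subsetP (edgesS E sCV) f fEC.
have [g gE /andP[gf fg]] := factor_critical_adjacent_edge Eirr fcC fEC.
have [M2 mM2 fM2] := maximal_matching_avoiding (subsetP (edgesS E sCV) g gE) gf fg.
have [M1 mM1 mfM1] :=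
  cut_vertex_component_augmentable (conj Esym Eirr) vV compC uC Euv mQ coverQ fQ.
by have /negP := maximal_del_edge_not_matching_setU1 eqG (stableG f fE) mM2 fM2 mM1.
Qed.
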